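(* Let $b_1,b_2,b_3\in\mathbb{R}$ with $b_1b_2b_3\neq0$ and $b_2b_3<0$, and consider the system $$\dot x_1=b_1x_2,\qquad \dot x_2=b_2x_1x_3,\qquad \dot x_3=b_3x_1x_2 .$$ Then for every $m\in\mathbb{R}\setminus\{0\}$ the equilibrium state $e_1^m=(m,0,0)$ is nonlinear stable.
   Context: Nonlinear stable means stable in the sense of Lyapunov: for every neighbourhood $U$ of the equilibrium there is a neighbourhood $V$ such that every trajectory starting in $V$ remains in $U$ for all $t\ge0$. *)

From Stdlib Require Import Reals.
Open Scope R_scope.

Definition dist3 (p q : R * R * R) : R :=
  let '(p1, p2, p3) := p in
  let '(q1, q2, q3) := q in
  sqrt ((p1 - q1)^2 + (p2 - q2)^2 + (p3 - q3)^2).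

Definition right_cont0 (f : R -> R) : Prop :=
  forall eps, 0 < eps -> exists d, 0 < d /\
    forall t, 0 < t < d -> Rabs (f t - f 0) < eps.

Definition is_solution (b1 b2 b3 T : R) (x1 x2 x3 : R -> R) : Prop :=
  (forall t, 0 < t < T ->
      derivable_pt_lim x1 t (b1 * x2 t) /\
      derivable_pt_lim x2 t (b2 * x1 t * x3 t) /\
      derivable_pt_lim x3 t (b3 * x1 t * x2 t)) /\
  right_cont0 x1 /\ right_cont0 x2 /\ right_cont0 x3.

(* Lyapunov (nonlinear) stability of the equilibrium e: for every
   eps-ball U around e there is a delta-ball V such that every trajectory
   starting in V stays in U for all t >= 0 (for as long as it exists;
   a trajectory on [0,+oo) restricts to every [0,T)). *)
Definition nonlinear_stable (b1 b2 b3 : R) (e : R * R * R) : Prop :=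
  forall eps, 0 < eps -> exists delta, 0 < delta /\
    forall (T : R) (x1 x2 x3 : R -> R),
      is_solution b1 b2 b3 T x1 x2 x3 ->
      dist3 (x1 0, x2 0, x3 0) e < delta ->
      forall t, 0 <= t < T -> dist3 (x1 t, x2 t, x3 t) e < eps.

(* Both b3 x2^2 - b2 x3^2 and b3 x1^2 - 2 b1 x3 are first integrals.  As
   b2 b3 < 0, the first one is, up to the sign of b3, a positive definite
   quadratic form in (x2, x3), so x2 and x3 stay small; the second one then
   keeps x1^2 close to m^2.  In particular x1 never vanishes, so by
   continuity it keeps the sign of m, and x1 itself stays close to m. *)

From Stdlib Require Import Reals Ranalysis5 Lra Psatz.
Open Scope R_scope.

Lemma dist3_lt_iff (p1 p2 p3 q1 q2 q3 r : R) : 0 < r ->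
  dist3 (p1, p2, p3) (q1, q2, q3) < r <->
  (p1 - q1)^2 + (p2 - q2)^2 + (p3 - q3)^2 < r^2.
Proof.
  intros Hr; unfold dist3; rewrite <- (sqrt_pow2 r) at 1 by lra.
  split; [apply sqrt_lt_0_alt|].
  intros H; apply sqrt_lt_1_alt; split; [|exact H].
  repeat apply Rplus_le_le_0_compat; apply pow2_ge_0.
Qed.

Lemma Rabs_lt_same_sign (a b : R) : Rabs (a - b) < Rabs b -> 0 < a * b.
Proof. unfold Rabs; destruct (Rcase_abs (a - b)), (Rcase_abs b); nra. Qed.

Lemma right_cont0_limit1_in (f : R -> R) :
  right_cont0 f <-> limit1_in f (fun t => 0 < t) (f 0) 0.
Proof.
  unfold right_cont0, limit1_in, limit_in; simpl; unfold R_dist; split.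
  - intros Hf eps Heps; destruct (Hf eps Heps) as [d [Hd Hfd]].
    exists d; split; [exact Hd|]; intros t [Ht Htd].
    apply Hfd; rewrite Rminus_0_r, Rabs_right in Htd by lra; lra.
  - intros Hf eps Heps; destruct (Hf eps Heps) as [d [Hd Hfd]].
    exists d; split; [exact Hd|]; intros t Ht.
    apply Hfd; rewrite Rminus_0_r, Rabs_right by lra; lra.
Qed.

Lemma limit1_in_const (c x0 : R) (D : R -> Prop) : limit1_in (fun _ => c) D c x0.
Proof. exact (limit_free (fun _ => c) D x0 x0). Qed.

Lemma const_of_derivable_pt_lim_0 (F : R -> R) (T : R) :
  (forall t, 0 < t < T -> derivable_pt_lim F t 0) -> right_cont0 F ->
  forall t, 0 <= t < T -> F t = F 0.
Proof.
  intros HF Hc t Ht.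
  assert (Hconst : forall s, 0 < s <= t -> F s = F t).
  { intros s Hs; destruct (Req_dec s t) as [->|Hst]; [reflexivity|].
    destruct (MVT_cor2 F (fun _ => 0) s t) as [c [Hc0 _]]; [lra| |lra].
    intros v Hv; apply HF; lra. }
  destruct (Req_dec (F t) (F 0)) as [|Hne]; [assumption|exfalso].
  destruct (Hc (Rabs (F t - F 0))) as [d [Hd Hfd]].
  { apply Rabs_pos_lt; lra. }
  destruct (Req_dec t 0) as [->|Ht0]; [lra|].
  set (s := Rmin t (d / 2)).
  assert (Hs : 0 < s <= t) by (unfold s; split; [apply Rmin_glb_lt|apply Rmin_l]; lra).
  assert (Hsd : s < d) by (unfold s; pose proof (Rmin_r t (d / 2)); lra).
  pose proof (Hfd s (conj (proj1 Hs) Hsd)) as Hlt.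
  rewrite (Hconst s Hs) in Hlt; lra.
Qed.

Lemma no_zero_no_sign_change (f : R -> R) (s t : R) : s <= t ->
  (forall v, s <= v <= t -> continuity_pt f v) ->
  (forall v, s <= v <= t -> f v <> 0) -> 0 < f s * f t.
Proof.
  intros Hst Hc Hnz.
  destruct (Req_dec s t) as [<-|Hne].
  { pose proof (Hnz s (conj (Rle_refl s) Hst)); nra. }
  assert (Hfs := Hnz s (conj (Rle_refl s) Hst)).
  assert (Hft := Hnz t (conj Hst (Rle_refl t))).
  destruct (Rtotal_order (f s) 0) as [Hs|[Hs|Hs]]; [|contradiction|];
    destruct (Rtotal_order (f t) 0) as [Ht|[Ht|Ht]]; try contradiction; try nra; exfalso.
  - destruct (IVT_interv f s t Hc) as [z [Hz Hfz]]; [lra|lra|lra|].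
    exact (Hnz z Hz Hfz).
  - destruct (IVT_interv (fun v => - f v) s t) as [z [Hz Hfz]]; [|lra|lra|lra|].
    + intros v Hv; apply continuity_pt_opp, Hc, Hv.
    + apply (Hnz z Hz); lra.
Qed.

Lemma sign_preserved (f : R -> R) (T : R) :
  (forall t, 0 < t < T -> continuity_pt f t) -> right_cont0 f ->
  (forall t, 0 <= t < T -> f t <> 0) ->
  forall t, 0 <= t < T -> 0 < f t * f 0.
Proof.
  intros Hc Hrc Hnz t Ht.
  assert (Hf0 : f 0 <> 0) by (apply Hnz; lra).
  destruct (Req_dec t 0) as [->|Ht0]; [nra|].
  destruct (Hrc (Rabs (f 0)) (Rabs_pos_lt _ Hf0)) as [d [Hd Hfd]].
  set (s := Rmin t (d / 2)).
  assert (Hs : 0 < s <= t) by (unfold s; split; [apply Rmin_glb_lt|apply Rmin_l]; lra).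
  assert (Hsd : s < d) by (unfold s; pose proof (Rmin_r t (d / 2)); lra).
  assert (Hs0 : 0 < f s * f 0) by (apply Rabs_lt_same_sign, Hfd; lra).
  assert (Hst : 0 < f s * f t).
  { apply no_zero_no_sign_change; [lra| |].
    - intros v Hv; apply Hc; lra.
    - intros v Hv; apply Hnz; lra. }
  nra.
Qed.

Section Solution.

Variables b1 b2 b3 T : R.
Variables x1 x2 x3 : R -> R.
Hypothesis sol : is_solution b1 b2 b3 T x1 x2 x3.

Lemma solution_continuity_pt_x1 (t : R) : 0 < t < T -> continuity_pt x1 t.
Proof.
  intros Ht; destruct (proj1 sol t Ht) as [d1 _].
  exact (derivable_continuous_pt _ _ (exist _ _ d1)).
Qed.

Lemma solution_energy_conserved (t : R) : 0 <= t < T ->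
  b3^2 * x2 t ^ 2 - b2 * b3 * x3 t ^ 2 = b3^2 * x2 0 ^ 2 - b2 * b3 * x3 0 ^ 2.
Proof.
  destruct sol as [Hd [_ [Hc2 Hc3]]].
  intros Ht.
  set (F := fun y => b3^2 * (x2 y * x2 y) - b2 * b3 * (x3 y * x3 y)).
  enough (HF : F t = F 0) by (unfold F in HF; lra).
  apply (const_of_derivable_pt_lim_0 F T); [| |exact Ht]; unfold F.
  - intros v Hv; destruct (Hd v Hv) as [_ [d2 d3]].
    replace 0 with (b3^2 * (b2 * x1 v * x3 v * x2 v + x2 v * (b2 * x1 v * x3 v))
      - b2 * b3 * (b3 * x1 v * x2 v * x3 v + x3 v * (b3 * x1 v * x2 v))) by ring.
    apply derivable_pt_lim_minus; apply derivable_pt_lim_scal;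
      apply derivable_pt_lim_mult; assumption.
  - apply right_cont0_limit1_in in Hc2, Hc3; apply right_cont0_limit1_in.
    apply limit_minus; apply limit_mul; try apply limit_mul; try assumption;
      apply limit1_in_const.
Qed.

Lemma solution_x1_relation (t : R) : 0 <= t < T ->
  b3 * x1 t ^ 2 - 2 * b1 * x3 t = b3 * x1 0 ^ 2 - 2 * b1 * x3 0.
Proof.
  destruct sol as [Hd [Hc1 [_ Hc3]]].
  intros Ht.
  set (F := fun y => b3 * (x1 y * x1 y) - 2 * b1 * x3 y).
  enough (HF : F t = F 0) by (unfold F in HF; lra).
  apply (const_of_derivable_pt_lim_0 F T); [| |exact Ht]; unfold F.
  - intros v Hv; destruct (Hd v Hv) as [d1 [_ d3]].
    replace 0 with (b3 * (b1 * x2 v * x1 v + x1 v * (b1 * x2 v))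
      - 2 * b1 * (b3 * x1 v * x2 v)) by ring.
    apply derivable_pt_lim_minus; apply derivable_pt_lim_scal;
      [apply derivable_pt_lim_mult|]; assumption.
  - apply right_cont0_limit1_in in Hc1, Hc3; apply right_cont0_limit1_in.
    apply limit_minus; apply limit_mul; try apply limit_mul; try assumption;
      apply limit1_in_const.
Qed.

End Solution.

Lemma Rabs_lt_of_sqr_lt (x r : R) : 0 <= r -> x^2 < r^2 -> Rabs x < r.
Proof. intros Hr H; unfold Rabs; destruct (Rcase_abs x); nra. Qed.

Lemma Rabs_sub_mul_le_sqr_sub (y m : R) : 0 < y * m ->
  Rabs (y - m) * Rabs m <= Rabs (y^2 - m^2).
Proof.
  intros Hym; replace (y^2 - m^2) with ((y - m) * (y + m)) by ring.
  rewrite Rabs_mult; apply Rmult_le_compat_l; [apply Rabs_pos|].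
  unfold Rabs; destruct (Rcase_abs m), (Rcase_abs (y + m)); nra.
Qed.

Lemma weighted_sqr_sum_bound (A B a2 a3 y2 y3 : R) : 0 < A -> 0 < B ->
  A * y2^2 + B * y3^2 = A * a2^2 + B * a3^2 ->
  y2^2 + y3^2 <= (A + B) * (/ A + / B) * (a2^2 + a3^2).
Proof.
  intros HA HB Heq.
  assert (Hy : y2^2 + y3^2 <= (/ A + / B) * (A * y2^2 + B * y3^2)).
  { replace ((/ A + / B) * (A * y2^2 + B * y3^2))
      with (y2^2 + y3^2 + (A / B * y2^2 + B / A * y3^2)) by (field; lra).
    assert (0 <= A / B * y2^2 + B / A * y3^2); [|lra].
    apply Rplus_le_le_0_compat; apply Rmult_le_pos;
      try apply pow2_ge_0; apply Rlt_le, Rdiv_lt_0_compat; lra. }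
  assert (Ha : A * a2^2 + B * a3^2 <= (A + B) * (a2^2 + a3^2)).
  { assert (0 <= B * a2^2) by (apply Rmult_le_pos; [lra|apply pow2_ge_0]).
    assert (0 <= A * a3^2) by (apply Rmult_le_pos; [lra|apply pow2_ge_0]).
    lra. }
  rewrite Heq in Hy; eapply Rle_trans; [exact Hy|].
  replace ((A + B) * (/ A + / B) * (a2^2 + a3^2)) with ((/ A + / B) * ((A + B) * (a2^2 + a3^2)))
    by ring.
  apply Rmult_le_compat_l; [|exact Ha].
  apply Rplus_le_le_0_compat; apply Rlt_le, Rinv_0_lt_compat; lra.
Qed.

Section Estimate.

Variables b1 b2 b3 m : R.
Hypothesis Hb3 : b3 <> 0.
Hypothesis Hb23 : b2 * b3 < 0.
Hypothesis Hm : m <> 0.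

Definition energy_ratio : R := (b3^2 + - (b2 * b3)) * (/ b3^2 + / - (b2 * b3)).
Definition x1_sqr_gain : R :=
  Rabs (2 * b1 / b3) * (energy_ratio + 1) + 2 * Rabs m + 1.
Definition stability_gain : R := x1_sqr_gain / Rabs m + energy_ratio.

Lemma b3_sqr_pos : 0 < b3^2.
Proof. rewrite <- Rsqr_pow2; apply Rsqr_pos_lt, Hb3. Qed.

Lemma energy_ratio_ge1 : 1 <= energy_ratio.
Proof.
  unfold energy_ratio; pose proof b3_sqr_pos as HA.
  replace ((b3^2 + - (b2 * b3)) * (/ b3^2 + / - (b2 * b3)))
    with (2 + (b3^2 / - (b2 * b3) + - (b2 * b3) / b3^2)) by (field; split; nra).
  assert (0 < b3^2 / - (b2 * b3)) by (apply Rdiv_lt_0_compat; lra).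
  assert (0 < - (b2 * b3) / b3^2) by (apply Rdiv_lt_0_compat; lra).
  lra.
Qed.

Lemma stability_gain_ge1 : 1 <= stability_gain.
Proof.
  unfold stability_gain, x1_sqr_gain; pose proof energy_ratio_ge1.
  assert (0 <= Rabs (2 * b1 / b3) * (energy_ratio + 1))
    by (apply Rmult_le_pos; [apply Rabs_pos|lra]).
  assert (0 < Rabs m) by (apply Rabs_pos_lt, Hm).
  assert (0 <= (Rabs (2 * b1 / b3) * (energy_ratio + 1) + 2 * Rabs m + 1) / Rabs m)
    by (apply Rmult_le_pos; [lra|apply Rlt_le, Rinv_0_lt_compat; lra]).
  lra.
Qed.

Variables a1 a2 a3 y1 y2 y3 delta : R.
Hypothesis Hdelta : 0 < delta <= 1.
Hypothesis Hinit : (a1 - m)^2 + a2^2 + a3^2 < delta^2.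
Hypothesis Henergy : b3^2 * y2^2 - b2 * b3 * y3^2 = b3^2 * a2^2 - b2 * b3 * a3^2.
Hypothesis Hx1 : b3 * y1^2 - 2 * b1 * y3 = b3 * a1^2 - 2 * b1 * a3.

Lemma conserved_sqr_bound : y2^2 + y3^2 < energy_ratio * delta^2.
Proof.
  pose proof energy_ratio_ge1.
  assert (Hb := weighted_sqr_sum_bound (b3^2) (- (b2 * b3)) a2 a3 y2 y3
    b3_sqr_pos ltac:(lra) ltac:(lra)).
  fold energy_ratio in Hb.
  assert (Ha : a2^2 + a3^2 < delta^2) by (pose proof (pow2_ge_0 (a1 - m)); lra).
  eapply Rle_lt_trans; [exact Hb|]; apply Rmult_lt_compat_l; lra.
Qed.

Lemma conserved_x1_sqr_bound : Rabs (y1^2 - m^2) <= x1_sqr_gain * delta.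
Proof.
  pose proof energy_ratio_ge1; pose proof conserved_sqr_bound.
  pose proof (pow2_ge_0 (a1 - m)); pose proof (pow2_ge_0 a2); pose proof (pow2_ge_0 y2).
  assert (Hy3 : Rabs y3 < energy_ratio * delta) by (apply Rabs_lt_of_sqr_lt; nra).
  assert (Ha3 : Rabs a3 < delta) by (apply Rabs_lt_of_sqr_lt; nra).
  assert (Ha1 : Rabs (a1 - m) < delta) by (apply Rabs_lt_of_sqr_lt; nra).
  assert (Hy1a1 : Rabs (y1^2 - a1^2) <= Rabs (2 * b1 / b3) * ((energy_ratio + 1) * delta)).
  { replace (y1^2 - a1^2) with (2 * b1 / b3 * (y3 - a3)) by (field_simplify_eq; [lra|exact Hb3]).
    rewrite Rabs_mult; apply Rmult_le_compat_l; [apply Rabs_pos|].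
    pose proof (Rabs_triang y3 (- a3)); rewrite Rabs_Ropp in *; unfold Rminus; lra. }
  assert (Ha1m : Rabs (a1^2 - m^2) <= (2 * Rabs m + 1) * delta).
  { replace (a1^2 - m^2) with ((a1 - m) * ((a1 - m) + 2 * m)) by ring.
    rewrite Rabs_mult.
    pose proof (Rabs_triang (a1 - m) (2 * m)); rewrite Rabs_mult, (Rabs_right 2) in * by lra.
    pose proof (Rabs_pos (a1 - m)); pose proof (Rabs_pos (a1 - m + 2 * m)); nra. }
  unfold x1_sqr_gain.
  replace (y1^2 - m^2) with ((y1^2 - a1^2) + (a1^2 - m^2)) by ring.
  pose proof (Rabs_triang (y1^2 - a1^2) (a1^2 - m^2)); lra.
Qed.

Lemma conserved_x1_nonzero : stability_gain * delta < Rabs m -> y1 <> 0.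
Proof.
  intros Hgain Hy1; pose proof conserved_x1_sqr_bound as Hb.
  rewrite Hy1 in Hb.
  assert (0 < Rabs m) by (apply Rabs_pos_lt, Hm).
  assert (Hg : x1_sqr_gain * delta <= Rabs m * (stability_gain * delta)).
  { unfold stability_gain; pose proof energy_ratio_ge1.
    replace (Rabs m * ((x1_sqr_gain / Rabs m + energy_ratio) * delta))
      with (x1_sqr_gain * delta + Rabs m * energy_ratio * delta) by (field; lra).
    assert (0 <= Rabs m * energy_ratio * delta)
      by (apply Rmult_le_pos; [apply Rmult_le_pos|]; lra).
    lra. }
  replace (0^2 - m^2) with (- (Rabs m)^2) in Hb by (rewrite pow2_abs; ring).
  rewrite Rabs_Ropp, Rabs_right in Hb by (apply Rle_ge, pow2_ge_0).
  nra.
Qed.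

Lemma conserved_close : 0 < y1 * m ->
  (y1 - m)^2 + y2^2 + y3^2 < (stability_gain * delta)^2.
Proof.
  intros Hsign.
  pose proof energy_ratio_ge1; pose proof conserved_sqr_bound.
  assert (Hm0 : 0 < Rabs m) by (apply Rabs_pos_lt, Hm).
  assert (Hy1 : Rabs (y1 - m) <= x1_sqr_gain / Rabs m * delta).
  { apply (Rmult_le_reg_r (Rabs m)); [exact Hm0|].
    replace (x1_sqr_gain / Rabs m * delta * Rabs m) with (x1_sqr_gain * delta) by (field; lra).
    eapply Rle_trans; [apply Rabs_sub_mul_le_sqr_sub, Hsign|apply conserved_x1_sqr_bound]. }
  set (p := x1_sqr_gain / Rabs m * delta) in Hy1.
  assert (Hp : 0 <= p) by (eapply Rle_trans; [apply Rabs_pos|exact Hy1]).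
  assert (Hy1sq : (y1 - m)^2 <= p^2).
  { rewrite <- (pow2_abs (y1 - m)); pose proof (Rabs_pos (y1 - m)); nra. }
  assert (Hk : energy_ratio * delta^2 <= (energy_ratio * delta)^2).
  { replace ((energy_ratio * delta)^2) with (energy_ratio * delta^2 * energy_ratio) by ring.
    rewrite <- (Rmult_1_r (energy_ratio * delta^2)) at 1.
    apply Rmult_le_compat_l; [apply Rmult_le_pos; [lra|apply pow2_ge_0]|lra]. }
  assert (0 <= p * (energy_ratio * delta)) by (apply Rmult_le_pos; [|apply Rmult_le_pos]; lra).
  replace (stability_gain * delta) with (p + energy_ratio * delta) by (unfold p, stability_gain; ring).
  nra.
Qed.

End Estimate.

Lemma exists_small_radius (C eps r : R) : 1 <= C -> 0 < eps -> 0 < r ->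
  exists delta, 0 < delta <= 1 /\ C * delta <= eps /\ C * delta < r.
Proof.
  intros HC Heps Hr.
  set (rho := Rmin eps (r / 2)).
  assert (Hrho : 0 < rho) by (apply Rmin_glb_lt; lra).
  exists (Rmin 1 (rho / C)).
  assert (HCd : C * Rmin 1 (rho / C) <= rho).
  { apply (Rmult_le_reg_l (/ C)); [apply Rinv_0_lt_compat; lra|].
    rewrite <- Rmult_assoc, Rinv_l, Rmult_1_l, Rmult_comm by lra; apply Rmin_r. }
  assert (rho <= eps /\ rho <= r / 2) by (split; [apply Rmin_l|apply Rmin_r]).
  repeat split; try lra; [|apply Rmin_l].
  apply Rmin_glb_lt; [lra|apply Rdiv_lt_0_compat; lra].
Qed.

Theorem proposition4p2 (b1 b2 b3 : R) :
  b1 * b2 * b3 <> 0 -> b2 * b3 < 0 ->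
  forall m : R, m <> 0 -> nonlinear_stable b1 b2 b3 (m, 0, 0).
Proof.
  intros Hb Hb23 m Hm eps Heps.
  assert (Hb3 : b3 <> 0) by (intros ->; apply Hb; ring).
  assert (Hm0 : 0 < Rabs m) by (apply Rabs_pos_lt, Hm).
  pose proof (stability_gain_ge1 b1 b2 b3 m Hb3 Hb23 Hm) as HC.
  destruct (exists_small_radius _ eps (Rabs m) HC Heps Hm0) as [delta [Hdelta [HCeps HCm]]].
  exists delta; split; [lra|].
  intros T x1 x2 x3 sol Hinit t Ht.
  apply dist3_lt_iff in Hinit; [|lra]; rewrite !Rminus_0_r in Hinit.
  assert (Hnz : forall s, 0 <= s < T -> x1 s <> 0).
  { intros s Hs; apply (conserved_x1_nonzero b1 b2 b3 m Hb3 Hb23 Hm (x1 0) (x2 0) (x3 0)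
      (x1 s) (x2 s) (x3 s) delta); try lra.
    - exact (solution_energy_conserved _ _ _ _ _ _ _ sol s Hs).
    - exact (solution_x1_relation _ _ _ _ _ _ _ sol s Hs). }
  assert (Ht0 : 0 < x1 t * x1 0).
  { apply (sign_preserved x1 T); [|apply sol|exact Hnz|exact Ht].
    exact (solution_continuity_pt_x1 _ _ _ _ _ _ _ sol). }
  assert (H0m : 0 < x1 0 * m).
  { assert (Hdm : delta < Rabs m) by nra.
    apply Rabs_lt_same_sign, Rabs_lt_of_sqr_lt; [lra|].
    pose proof (pow2_ge_0 (x2 0)); pose proof (pow2_ge_0 (x3 0)); nra. }
  apply dist3_lt_iff; [lra|]; rewrite !Rminus_0_r.
  eapply Rlt_le_trans.
  - apply (conserved_close b1 b2 b3 m Hb3 Hb23 Hm (x1 0) (x2 0) (x3 0)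
      (x1 t) (x2 t) (x3 t) delta Hdelta Hinit).
    + exact (solution_energy_conserved _ _ _ _ _ _ _ sol t Ht).
    + exact (solution_x1_relation _ _ _ _ _ _ _ sol t Ht).
    + nra.
  - apply pow_incr; split; [apply Rmult_le_pos|]; lra.
Qed.
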